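(* Let $(\mathcal{M},\mathcal{L})$ be a regular symplectic pair with $\mathcal{M},\mathcal{L}\in\mathbb{C}^{2n\times2n}$ and $\mathrm{ind}_\infty(\mathcal{M},\mathcal{L})\le1$. Let $\hat n\le n$, $\ell=n-\hat n$, $U_0,U_\infty\in\mathbb{C}^{2n\times\ell}$, $U_1\in\mathbb{C}^{2n\times2\hat n}$, $\mathbf{U}=[U_1\,|\,U_0,U_\infty]$ and a symplectic $\widehat{\mathcal{S}}\in\mathbb{C}^{2\hat n\times2\hat n}$ satisfy $\mathbf{U}^H\mathcal{J}_n\mathbf{U}=\mathcal{J}_{\hat n}\oplus\mathcal{J}_\ell$, $\mathcal{M}U_0=0$, $\mathcal{L}U_\infty=0$, $\mathcal{M}U_1=\mathcal{L}U_1\widehat{\mathcal{S}}$, and let $\widehat{\mathcal{H}}$ be a Hamiltonian matrix with $e^{\widehat{\mathcal{H}}}=\widehat{\mathcal{S}}$. Define $$\mathcal{H}=\mathbf{U}(\widehat{\mathcal{H}}\oplus 0_{2\ell})(\mathcal{J}_{\hat n}\oplus\mathcal{J}_\ell)^H\mathbf{U}^H\mathcal{J}_n,$$ $$\Pi_0=\mathbf{U}(I_{2\hat n}\oplus I_\ell\oplus 0_\ell)(\mathcal{J}_{\hat n}\oplus\mathcal{J}_\ell)^H\mathbf{U}^H\mathcal{J}_n,\qquad \Pi_\infty=\mathbf{U}(I_{2\hat n}\oplus 0_\ell\oplus I_\ell)(\mathcal{J}_{\hat n}\oplus\mathcal{J}_\ell)^H\mathbf{U}^H\mathcal{J}_n.$$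 Then $\mathcal{M}\Pi_0=\mathcal{L}\Pi_\infty e^{\mathcal{H}}$.
   Context: $\mathcal{J}_m=\begin{bmatrix}0&I_m\\-I_m&0\end{bmatrix}$. A matrix $\mathcal{H}\in\mathbb{C}^{2m\times2m}$ is Hamiltonian if $\mathcal{H}\mathcal{J}_m=(\mathcal{H}\mathcal{J}_m)^H$; $\mathcal{S}$ is symplectic if $\mathcal{S}\mathcal{J}_m\mathcal{S}^H=\mathcal{J}_m$. A pair $(\mathcal{M},\mathcal{L})$ is symplectic if $\mathcal{M}\mathcal{J}_n\mathcal{M}^H=\mathcal{L}\mathcal{J}_n\mathcal{L}^H$, regular if $\det(\mathcal{M}-\lambda\mathcal{L})\ne0$ for some $\lambda$. $\mathrm{ind}_\infty(A,B)$ is the nilpotency index of the nilpotent block $N$ in the Kronecker canonical form $PAQ=\mathrm{diag}(J,I)$, $PBQ=\mathrm{diag}(I,N)$ of a regular pair, and is $0$ if $B$ is invertible. *)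

From HB Require Import structures.
From mathcomp Require Import all_boot all_order all_algebra.
From mathcomp Require Import complex.
From mathcomp Require Import all_classical all_reals all_analysis.
Set Implicit Arguments. Unset Strict Implicit. Unset Printing Implicit Defensive.
Import Order.TTheory GRing.Theory Num.Theory.
Import numFieldNormedType.Exports.
Local Open Scope ring_scope.
Local Open Scope complex_scope.
Local Open Scope classical_set_scope.

Definition ctmx (C : numClosedFieldType) m n (A : 'M[C]_(m, n)) : 'M[C]_(n, m) :=
  (map_mx Num.conj A)^T.

Definition Jmx (C : pzRingType) m : 'M[C]_(m + m) := block_mx 0 1%:M (- 1%:M) 0.

Definition dsum (C : pzRingType) m p (A : 'M[C]_m) (B : 'M[C]_p) : 'M[C]_(m + p) :=
  block_mx A 0 0 B.

Definition hamiltonian (C : numClosedFieldType) m (H : 'M[C]_(m + m)) : Prop :=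
  H *m Jmx C m = ctmx (H *m Jmx C m).

Definition symplectic (C : numClosedFieldType) m (S : 'M[C]_(m + m)) : Prop :=
  S *m Jmx C m *m ctmx S = Jmx C m.

Definition symplectic_pair (C : numClosedFieldType) m (M L : 'M[C]_(m + m)) : Prop :=
  M *m Jmx C m *m ctmx M = L *m Jmx C m *m ctmx L.

Definition regular_pair (C : comUnitRingType) k (A B : 'M[C]_k) : Prop :=
  exists lam : C, \det (A - lam *: B) != 0.

(* ind_oo(A,B) <= d : there is a Kronecker (Weierstrass) form
   P A Q = diag(J, I_s), P B Q = diag(I_r, N), with P, Q invertible and
   N nilpotent of nilpotency index <= d (i.e. N^d = 0; for s = 0 the
   index is 0, matching the convention ind = 0 when B is invertible). *)
Definition ind_infty_le (C : pzRingType) k (A B : 'M[C]_k) (d : nat) : Prop :=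
  exists (r s : nat) (P P' : 'M[C]_(r + s, k)) (Q Q' : 'M[C]_(k, r + s))
         (J : 'M[C]_r) (N : 'M[C]_s),
    [/\ P *m Q' = 1%:M /\ Q' *m P = 1%:M, Q *m P' = 1%:M /\ P' *m Q = 1%:M,
        P *m A *m Q = block_mx J 0 0 1%:M,
        P *m B *m Q = block_mx 1%:M 0 0 N
      & N ^+ d = 0].

Definition expmx (R : realType) m (A : 'M[R[i]]_m) : 'M[R[i]]_m :=
  lim ((fun N : nat => \sum_(k < N) (k`!%:R)^-1 *: A ^+ k) @ \oo).

(* Let K := (J_nh (+) J_l)^H U^H J_n; the J-orthogonality of U says K U = 1.
   With W the first 2nh rows of K we get W U1 = 1 and H = U1 Hh W, so the
   exponential series of H is conjugate to that of Hh up to the constant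
   defect 1 - U1 W, and e^H = 1 - U1 W + U1 Sh W.  Since M U0 = 0 and
   L Uinf = 0, M Pi0 = M U1 W and L Piinf = L U1 W, and the claim reduces to
   M U1 = L U1 Sh. *)

From HB Require Import structures.
From mathcomp Require Import all_boot all_order all_algebra.
From mathcomp Require Import complex.
From mathcomp Require Import all_classical all_reals all_analysis.
Import Order.TTheory GRing.Theory Num.Theory.
Import numFieldNormedType.Exports.
Local Open Scope ring_scope.
Local Open Scope complex_scope.
Local Open Scope classical_set_scope.

Section MatrixSeries.
Context {C : numFieldType}.

Lemma cvg_mulmx (T : Type) (F : set_system T) {FF : Filter F} p q r s
    (A : 'M[C]_(p, q)) (B : 'M[C]_(r, s)) (f : T -> 'M[C]_(q, r)) (l : 'M[C]_(q, r)) :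
  f @ F --> l -> (fun t => A *m f t *m B) @ F --> A *m l *m B.
Proof.
pose D i j : 'M[C]_(p, s) := A *m delta_mx i j *m B.
have expand (X : 'M[C]_(q, r)) : A *m X *m B = \sum_i \sum_j X i j *: D i j.
  rewrite {1}(matrix_sum_delta X) mulmx_sumr mulmx_suml; apply: eq_bigr => i _.
  rewrite mulmx_sumr mulmx_suml; apply: eq_bigr => j _.
  by rewrite -scalemxAr -scalemxAl.
move=> fl; rewrite expand; under eq_fun do rewrite expand.
apply: cvg_big => [|i _]; first exact: add_continuous.
apply: cvg_big => [|j _]; first exact: add_continuous.
apply: (@cvgZr_tmp _ _ _ _ _ (fun t => f t i j)).
exact: (continuous_cvg _ (@coord_continuous _ _ _ i j l) fl).
Qed.

Definition exp_series {m} (A : 'M[C]_m) (N : nat) : 'M[C]_m :=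
  \sum_(k < N) (k`!%:R)^-1 *: A ^+ k.

Section Conjugation.
Variables (m p : nat) (V : 'M[C]_(m, p)) (W : 'M[C]_(p, m)).
Hypothesis WV : W *m V = 1%:M.

Lemma exprS_conj (X : 'M[C]_p) k : (V *m X *m W) ^+ k.+1 = V *m X ^+ k.+1 *m W.
Proof.
elim: k => [|k IH]; first by rewrite !expr1.
rewrite exprS IH -mulmxE [X ^+ k.+2]exprS -mulmxE !mulmxA.
by rewrite -(mulmxA _ W V) WV mulmx1.
Qed.

(* The k = 0 term of the series is 1, not V *m 1 *m W; the defect is 1 - V W. *)
Lemma exp_seriesS_conj (X : 'M[C]_p) N :
  exp_series (V *m X *m W) N.+1 = 1 - V *m W + V *m exp_series X N.+1 *m W.
Proof.
rewrite /exp_series !big_ord_recl /= !expr0 invr1 !scale1r.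
rewrite mulmxDr mulmxDl mulmx1 addrA subrK mulmx_sumr mulmx_suml.
by congr (_ + _); apply: eq_bigr => k _; rewrite exprS_conj scalemxAl scalemxAr.
Qed.

Lemma cvg_exp_series_conj (X E : 'M[C]_p) :
  exp_series X @ \oo --> E ->
  exp_series (V *m X *m W) @ \oo --> 1 - V *m W + V *m E *m W.
Proof.
move=> XE; rewrite -cvg_shiftS; under eq_fun do rewrite exp_seriesS_conj.
by apply: cvgD; [exact: cvg_cst | apply: cvg_mulmx; rewrite cvg_shiftS].
Qed.

Lemma lim_exp_series_conj (X : 'M[C]_p) : cvg (exp_series X @ \oo) ->
  lim (exp_series (V *m X *m W) @ \oo) = 1 - V *m W + V *m lim (exp_series X @ \oo) *m W.
Proof.
move=> /cvg_ex[E XE]; rewrite (cvg_lim (@norm_hausdorff _ _) XE).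
exact/(cvg_lim (@norm_hausdorff _ _))/cvg_exp_series_conj.
Qed.

End Conjugation.
End MatrixSeries.

Section ConjugateTranspose.
Context {C : numClosedFieldType}.

Lemma ctmx_Jmx m : ctmx (Jmx C m) = - Jmx C m.
Proof.
rewrite /ctmx /Jmx map_block_mx tr_block_mx !map_mx0 !trmx0 map_mxN map_mx1.
by rewrite linearN /= trmx1 opp_block_mx !oppr0 opprK.
Qed.

Lemma ctmx_Jmx_mulJ m : ctmx (Jmx C m) *m Jmx C m = 1%:M.
Proof.
rewrite ctmx_Jmx mulNmx /Jmx mulmx_block !mulmx0 !mul0mx !mulmx1 !mul1mx.
by rewrite !addr0 !add0r opp_block_mx !oppr0 opprK scalar_mx_block.
Qed.

Lemma ctmx_dsum m p (A : 'M[C]_m) (B : 'M[C]_p) :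
  ctmx (dsum A B) = dsum (ctmx A) (ctmx B).
Proof. by rewrite /ctmx /dsum map_block_mx tr_block_mx !map_mx0 !trmx0. Qed.

Lemma mul_dsum m p (A A' : 'M[C]_m) (B B' : 'M[C]_p) :
  dsum A B *m dsum A' B' = dsum (A *m A') (B *m B').
Proof. by rewrite /dsum mulmx_block !mulmx0 !mul0mx !addr0 !add0r. Qed.

Lemma dsum1 m p : dsum (1%:M : 'M[C]_m) (1%:M : 'M[C]_p) = 1%:M.
Proof. by rewrite /dsum scalar_mx_block. Qed.

End ConjugateTranspose.

Section Exponential.
Variable R : realType.

Lemma expmxE m (A : 'M[R[i]]_m) : expmx A = lim (exp_series A @ \oo).
Proof. by []. Qed.

(* [lim] returns the junk value [0] on a divergent sequence of matrices. *)
Lemma expmx_div m (A : 'M[R[i]]_m) : ~ cvg (exp_series A @ \oo) -> expmx A = 0.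
Proof.
move=> div; rewrite expmxE /lim /lim_in getPN; last by move=> l /cvgP.
by apply/matrixP => i j; rewrite !mxE.
Qed.

Lemma expmx_conj m p (V : 'M[R[i]]_(m, p)) (W : 'M[R[i]]_(p, m)) (X : 'M[R[i]]_p) :
  W *m V = 1%:M -> cvg (exp_series X @ \oo) ->
  expmx (V *m X *m W) = 1 - V *m W + V *m expmx X *m W.
Proof. by move=> WV; rewrite !expmxE; exact: lim_exp_series_conj. Qed.

(* Divergence would make expmx A the junk value 0, which is symplectic only
   when 'M_(m + m) is trivial, and then every series converges. *)
Lemma cvg_exp_series_symplectic m (A : 'M[R[i]]_(m + m)) :
  symplectic (expmx A) -> cvg (exp_series A @ \oo).
Proof.
move=> sympl; apply: contrapT => div.
have trivial : (1%:M : 'M[R[i]]_(m + m)) = 0.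
  by rewrite -ctmx_Jmx_mulJ -sympl expmx_div // !mul0mx mulmx0.
apply: div; have -> : exp_series A = fun=> 0.
  by apply: funext => N; rewrite -[LHS]mul1mx trivial mul0mx.
exact: is_cvg_cst.
Qed.

End Exponential.

Theorem lemma2p6 (R : realType) (n nh : nat) (hle : (nh <= n)%N)
  (M L : 'M[R[i]]_(n + n))
  (U1 : 'M[R[i]]_(n + n, nh + nh))
  (U0 Uinf : 'M[R[i]]_(n + n, n - nh))
  (Sh Hh : 'M[R[i]]_(nh + nh)) :
  regular_pair M L ->
  symplectic_pair M L ->
  ind_infty_le M L 1 ->
  symplectic Sh ->
  let U := row_mx U1 (row_mx U0 Uinf) in
  let JJ := dsum (Jmx _ nh) (Jmx _ (n - nh)) in
  ctmx U *m Jmx _ n *m U = JJ ->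
  M *m U0 = 0 ->
  L *m Uinf = 0 ->
  M *m U1 = L *m U1 *m Sh ->
  hamiltonian Hh ->
  expmx Hh = Sh ->
  let H := U *m dsum Hh 0 *m ctmx JJ *m ctmx U *m Jmx _ n in
  let Pi0 := U *m dsum 1%:M (dsum 1%:M 0) *m ctmx JJ *m ctmx U *m Jmx _ n in
  let Piinf := U *m dsum 1%:M (dsum 0 1%:M) *m ctmx JJ *m ctmx U *m Jmx _ n in
  M *m Pi0 = L *m Piinf *m expmx H.
Proof.
move=> _ _ _ sympl U JJ UJU MU0 LUinf MU1 _ expHh H Pi0 Piinf.
pose K := ctmx JJ *m ctmx U *m Jmx _ n.
have KU : K *m U = 1%:M.
  by rewrite /K -!mulmxA (mulmxA (ctmx U)) UJU ctmx_dsum mul_dsum !ctmx_Jmx_mulJ dsum1.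
pose W := row_mx 1%:M 0 *m K.
have U1E : U1 = U *m col_mx 1%:M 0 by rewrite mul_row_col mulmx1 mulmx0 addr0.
have WU1 : W *m U1 = 1%:M.
  by rewrite U1E mulmxA -(mulmxA _ K) KU mulmx1 mul_row_col mulmx1 mulmx0 addr0.
have HE : H = U1 *m Hh *m W.
  rewrite /H U1E /W /K !mulmxA; congr (_ *m _ *m _ *m _).
  by rewrite -!mulmxA mul_mx_row mulmx1 mulmx0 mul_col_mx mul1mx mul0mx /dsum block_mxEv row_mx0.
have expH : expmx H = 1 - U1 *m W + U1 *m Sh *m W.
  rewrite HE expmx_conj // ?expHh //.
  by apply: cvg_exp_series_symplectic; rewrite expHh.
have MPi0 : M *m Pi0 = M *m U1 *m W.
  rewrite /Pi0 /W /K !mulmxA; congr (_ *m _ *m _ *m _).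
  by rewrite /U /dsum -mulmxA !mul_row_block !mulmx0 !mulmx1 !addr0 !add0r !mul_mx_row MU0 !mulmx0 mulmx1 row_mx0.
have LPiinf : L *m Piinf = L *m U1 *m W.
  rewrite /Piinf /W /K !mulmxA; congr (_ *m _ *m _ *m _).
  by rewrite /U /dsum -mulmxA !mul_row_block !mulmx0 !mulmx1 !addr0 !add0r !mul_mx_row LUinf !mulmx0 mulmx1 row_mx0.
rewrite MPi0 LPiinf expH MU1; clearbody W.
by rewrite mulmxDr mulmxBr mulmx1 !mulmxA -!(mulmxA _ W U1) WU1 !mulmx1 subrr add0r.
Qed.
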